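(* Let $m\ge 1$, $p\ge 2$, let $a_1,\dots,a_p\in\mathbb C$, and let $b_{j,k}\in\mathbb C\setminus\{0,-1,-2,\dots\}$ for $1\le j\le p-1$, $1\le k\le m$. Then the series $F_C^{p,m}(a,B;x)$ converges absolutely at every point of $$\mathbb D=\{x\in\mathbb C^m \mid \sqrt[p]{|x_1|}+\cdots+\sqrt[p]{|x_m|}<1\}.$$
   Context: Pochhammer's symbol: $(\alpha,n)=\alpha(\alpha+1)\cdots(\alpha+n-1)=\Gamma(\alpha+n)/\Gamma(\alpha)$, $\mathbb N=\{0,1,2,\dots\}$. Parameters: $a={}^t(a_1,\dots,a_p)$ and $B=(b_{j,k})_{1\le j\le p,\,1\le k\le m}$ with the convention $b_{p,k}=1$ for all $k$. The series is $$F_C^{p,m}(a,B;x)=\sum_{(n_1,\dots,n_m)\in\mathbb N^m}\frac{(a_1,n_1+\cdots+n_m)\cdots(a_p,n_1+\cdots+n_m)}{\prod_{k=1}^m\{(b_{1,k},n_k)\cdots(b_{p-1,k},n_k)\,n_k!\}}x_1^{n_1}\cdots x_m^{n_m}.$$ *)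

From HB Require Import structures.
From mathcomp Require Import all_boot all_order all_algebra.
From mathcomp Require Import all_classical all_reals all_analysis.
From mathcomp Require Import complex.
Set Implicit Arguments. Unset Strict Implicit. Unset Printing Implicit Defensive.
Import Order.TTheory GRing.Theory Num.Theory.
Local Open Scope ring_scope.

Definition pochhammer (F : pzRingType) (alpha : F) (n : nat) : F :=
  \prod_(i < n) (alpha + i%:R).

(* General term of F_C^{p,m}(a,B;x) at the multi-index nn = (n_1,...,n_m).
   a : 'I_p -> C gives a_1..a_p; B : 'I_p.-1 -> 'I_m -> C gives b_{j,k} for
   1 <= j <= p-1 (the convention b_{p,k} = 1 yields the factor n_k!). *)
Definition FC_term (R : realType) (p m : nat) (a : 'I_p -> R[i])
  (B : 'I_p.-1 -> 'I_m -> R[i]) (x : 'I_m -> R[i]) (nn : {ffun 'I_m -> nat})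
  : R[i] :=
  (\prod_(j < p) pochhammer (a j) (\sum_(k < m) nn k)%N)
  / (\prod_(k < m) ((\prod_(j < p.-1) pochhammer (B j k) (nn k)) * (nn k)`!%:R))
  * \prod_(k < m) x k ^+ nn k.

Definition FC_abs_conv (R : realType) (p m : nat) (a : 'I_p -> R[i])
  (B : 'I_p.-1 -> 'I_m -> R[i]) (x : 'I_m -> R[i]) : Prop :=
  summable [set: {ffun 'I_m -> nat}]
    (fun nn => (@complex.Re R `|FC_term a B x nn|)%:E).

Definition FC_domain (R : realType) (p m : nat) (x : 'I_m -> R[i]) : Prop :=
  \sum_(k < m) (@complex.Re R `|x k|) `^ (p%:R^-1) < 1.

From HB Require Import structures.
From mathcomp Require Import all_boot all_order all_algebra.
From mathcomp Require Import all_classical all_reals all_analysis.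
From mathcomp Require Import complex.
From mathcomp Require Import ring lra.
Set Implicit Arguments. Unset Strict Implicit. Unset Printing Implicit Defensive.
Import Order.TTheory GRing.Theory Num.Theory.
Import ComplexField.Normc.
Local Open Scope ring_scope.

(* Put r_k = |x_k|^(1/p) and rho = r_1 + ... + r_m < 1.  When n_1 + ... + n_m = N,
   the modulus of the general term factors as
     prod_j |(a_j, N)| / N!  *  prod_(j,k) n_k! / |(b_(j,k), n_k)|
       *  (N! / (n_1! ... n_m!) * r_1^n_1 ... r_m^n_m)^p.
   By the ratio test |(a, n)| / n! and n! / |(b, n)| are O(theta^n) for every
   theta > 1, and the last factor is at most rho^(N p) by the multinomial theorem.
   Hence the term is O(q^N) with q = theta^(2p-1) rho^p, which is < 1 for theta
   close to 1, and the sum of q^N over all multi-indices is (1 - q)^(-m). *)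

Section RealFieldBounds.
Variable R : realFieldType.

Lemma geometric_sum_le (q : R) n : 0 <= q -> q < 1 ->
  \sum_(j < n) q ^+ j <= (1 - q)^-1.
Proof.
move=> q_ge0 q_lt1; have omq_gt0 : 0 < 1 - q by rewrite subr_gt0.
elim: n => [|n IHn]; first by rewrite big_ord0 invr_ge0 ltW.
rewrite big_ord_recl expr0; under eq_bigr do rewrite exprS.
rewrite -mulr_sumr (le_trans (y := 1 + q * (1 - q)^-1)) ?lerD2l ?ler_wpM2l //.
by rewrite le_eqVlt; apply/orP; left; apply/eqP; field; rewrite lt0r_neq0.
Qed.

Lemma ratio_le_geometric (u : nat -> R) (th : R) N0 :
  0 < th -> (forall n, 0 <= u n) ->
  (forall n, (N0 <= n)%N -> u n.+1 <= th * u n) ->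
  exists C, forall n, u n <= C * th ^+ n.
Proof.
move=> th_gt0 u_ge0 u_ratio; pose C := \sum_(i < N0.+1) u i / th ^+ i; exists C.
have u_init i : (i <= N0)%N -> u i <= C * th ^+ i.
  move=> i_le; rewrite -ler_pdivrMr ?exprn_gt0 // /C.
  rewrite (bigD1 (Ordinal (i_le : (i < N0.+1)%N))) //=.
  by rewrite lerDl sumr_ge0 // => j _; rewrite divr_ge0 ?exprn_ge0 ?(ltW th_gt0).
elim=> [|n IHn]; first exact: u_init.
have [/u_init //|N0_lt] := leqP n.+1 N0.
by rewrite (le_trans (u_ratio n N0_lt)) // exprS mulrCA ler_wpM2l ?(ltW th_gt0).
Qed.

(* One term of the multinomial expansion of the right-hand side. *)
Lemma multinomial_le (I : Type) (r : seq I) (n : I -> nat) (s : I -> R) :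
  (forall i, 0 <= s i) ->
  (\sum_(i <- r) n i)`!%:R / (\prod_(i <- r) (n i)`!%:R) *
    \prod_(i <- r) s i ^+ n i <= (\sum_(i <- r) s i) ^+ (\sum_(i <- r) n i).
Proof.
move=> s_ge0; elim: r => [|i r IHr]; first by rewrite !big_nil /= divr1 mulr1.
rewrite !big_cons.
set A := n i; set M := \sum_(j <- r) n j; set a := s i; set b := \sum_(j <- r) s j.
set P := \prod_(j <- r) (n j)`!%:R; set Q := \prod_(j <- r) s j ^+ n j.
have P_neq0 : P != 0.
  by rewrite gt_eqF // prodr_gt0 // => j _; rewrite ltr0n fact_gt0.
have A_neq0 : (A`!%:R : R) != 0 by rewrite pnatr_eq0 -lt0n fact_gt0.
have b_ge0 : 0 <= b by rewrite sumr_ge0.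
have a_ge0 : 0 <= a by exact: s_ge0.
have -> : (A + M)`!%:R / (A`!%:R * P) * (a ^+ A * Q)
    = 'C(A + M, A)%:R * a ^+ A * (M`!%:R / P * Q) :> R.
  rewrite -(bin_fact (leq_addr M A)) addKn !natrM.
  by field; rewrite P_neq0 A_neq0.
apply: (le_trans (y := 'C(A + M, A)%:R * a ^+ A * b ^+ M)).
  by rewrite ler_wpM2l // mulr_ge0 // exprn_ge0.
have A_lt : (A < (A + M).+1)%N by rewrite ltnS leq_addr.
rewrite addrC exprDn (bigD1 (Ordinal A_lt)) //=.
rewrite addKn -[X in X <= _]addr0 lerD //.
  by rewrite -[in X in _ <= X]mulr_natl [b ^+ M * _]mulrC mulrA.
by apply: sumr_ge0 => j _; rewrite mulrn_wge0 // mulr_ge0 // exprn_ge0.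
Qed.

End RealFieldBounds.

Lemma ler_sum_uniq_subset (R : numDomainType) (T : eqType) (s t : seq T)
  (g : T -> R) : uniq s -> uniq t -> {subset s <= t} -> (forall x, 0 <= g x) ->
  \sum_(x <- s) g x <= \sum_(x <- t) g x.
Proof.
move=> s_uniq t_uniq s_sub g_ge0.
rewrite [X in _ <= X](bigID (mem s)) /=.
have -> : \sum_(x <- t | x \in s) g x = \sum_(x <- s) g x.
  rewrite -big_filter; apply: perm_big; apply: uniq_perm => //; first exact: filter_uniq.
  move=> y; rewrite mem_filter andbC.
  by have [/s_sub -> | ] := boolP (y \in s); rewrite ?andbF.
by rewrite lerDl sumr_ge0.
Qed.

(* Any finite set of indices lies in a box {0..K}^m, over which the sum is a
   product of m truncated geometric sums. *)
Lemma sum_geometric_ffun_le (R : realFieldType) m (q : R)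
  (s : seq {ffun 'I_m -> nat}) : uniq s -> 0 <= q -> q < 1 ->
  \sum_(nn <- s) q ^+ (\sum_k nn k) <= (1 - q)^-1 ^+ m.
Proof.
move=> s_uniq q_ge0 q_lt1; under eq_bigr do rewrite expr_sum.
pose K := \max_(nn <- s) \max_(k < m) nn k.
pose box (f : {ffun 'I_m -> 'I_K.+1}) : {ffun 'I_m -> nat} := [ffun k => val (f k)].
have box_inj : injective box.
  move=> f g /ffunP fg; apply/ffunP => k; apply/val_inj.
  by have := fg k; rewrite !ffunE.
have s_sub : {subset s <= map box (enum {ffun 'I_m -> 'I_K.+1})}.
  move=> nn nn_s; apply/mapP.
  exists [ffun k => inord (nn k)]; first by rewrite mem_enum.
  apply/ffunP => k; rewrite !ffunE /= inordK // ltnS.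
  have := @leq_bigmax_seq _ s xpredT
    (fun nn : {ffun 'I_m -> nat} => \max_(k < m) nn k) nn nn_s isT.
  by apply: leq_trans; exact: (@leq_bigmax _ (fun k => nn k) k).
have box_uniq : uniq (map box (enum {ffun 'I_m -> 'I_K.+1})).
  by rewrite map_inj_uniq // enum_uniq.
apply: (le_trans (ler_sum_uniq_subset s_uniq box_uniq s_sub _)).
  by move=> nn; apply: prodr_ge0 => k _; apply: exprn_ge0.
rewrite big_map big_enum /=; under eq_bigr do under eq_bigr do rewrite ffunE.
rewrite -(bigA_distr_bigA (fun (k : 'I_m) (j : 'I_K.+1) => q ^+ j)) /=.
rewrite -[in X in _ <= X](card_ord m) -prodr_const.
apply: ler_prod => k _; rewrite sumr_ge0 => [|j _]; last exact: exprn_ge0.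
exact: geometric_sum_le.
Qed.

Lemma summable_le_geometric (R : realType) m (u : {ffun 'I_m -> nat} -> R)
  (C q : R) : 0 <= q -> q < 1 ->
  (forall nn, `|u nn| <= C * q ^+ (\sum_k nn k)) ->
  summable [set: {ffun 'I_m -> nat}] (fun nn => (u nn)%:E).
Proof.
move=> q_ge0 q_lt1 u_le.
have C_ge0 : 0 <= C.
  have := u_le [ffun=> 0%N]; rewrite big1 => [|k _]; last by rewrite ffunE.
  by rewrite expr0 mulr1; apply: le_trans.
apply: (le_lt_trans (y := (C * (1 - q)^-1 ^+ m)%:E)); last exact: ltry.
apply: ge_ereal_sup => _ [A [A_fin _] <-].
rewrite fsbig_finite //= sumEFin lee_fin.
rewrite (le_trans (ler_sum _ (fun nn _ => u_le nn))) // -mulr_sumr ler_wpM2l //.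
exact: sum_geometric_ffun_le (finmap.fset_uniq _) q_ge0 q_lt1.
Qed.

Lemma pochhammerS (F : pzRingType) (alpha : F) n :
  pochhammer alpha n.+1 = pochhammer alpha n * (alpha + n%:R).
Proof. by rewrite /pochhammer big_ord_recr. Qed.

Section PochhammerGrowth.
Variable R : realType.
Implicit Types (z : R[i]) (th : R).

Lemma normc_ge0 z : 0 <= normc z.
Proof. by case: z => a b; rewrite sqrtr_ge0. Qed.

Lemma normc_gt0 z : z != 0 -> 0 < normc z.
Proof.
move=> z_neq0; rewrite lt_def normc_ge0 andbT.
by apply: contra z_neq0 => /eqP/eq0_normc ->.
Qed.

Lemma normc_prod (I : Type) (r : seq I) (P : pred I) (F : I -> R[i]) :
  normc (\prod_(i <- r | P i) F i) = \prod_(i <- r | P i) normc (F i).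
Proof. exact: (big_morph _ (@normcM R) (@normc1 R)). Qed.

Lemma normcX z n : normc (z ^+ n) = normc z ^+ n.
Proof. by rewrite -(card_ord n) -!prodr_const normc_prod. Qed.

Lemma normc_natr n : normc (n%:R : R[i]) = n%:R.
Proof. by rewrite normcMn normc1. Qed.

Lemma pochhammer_le_geometric z th : 1 < th ->
  exists C, forall n, normc (pochhammer z n) / n`!%:R <= C * th ^+ n.
Proof.
move=> th_gt1; have th1_gt0 : 0 < th - 1 by rewrite subr_gt0.
set N0 := Num.bound (normc z / (th - 1)).
apply: (ratio_le_geometric (N0 := N0)); first exact: lt_trans th_gt1.
  by move=> n; rewrite divr_ge0 ?normc_ge0.
move=> n n_ge; rewrite pochhammerS normcM factS natrM invfM.
rewrite [X in X <= _](_ : _ =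
  normc (z + n%:R) / n.+1%:R * (normc (pochhammer z n) / n`!%:R)); last by ring.
rewrite ler_wpM2r ?divr_ge0 ?normc_ge0 // ler_pdivrMr ?ltr0Sn //.
rewrite (le_trans (le_normcD _ _)) // normc_natr.
have : normc z < (th - 1) * n%:R.
  rewrite mulrC -ltr_pdivrMr //; apply: lt_le_trans (archi_boundP _) _.
    by rewrite divr_ge0 ?normc_ge0 ?ltW.
  by rewrite ler_nat.
by rewrite -natr1; nra.
Qed.

Lemma inv_pochhammer_le_geometric z th : 1 < th -> (forall n, z != - n%:R) ->
  exists C, forall n, n`!%:R / normc (pochhammer z n) <= C * th ^+ n.
Proof.
move=> th_gt1 z_poles; have th1_gt0 : 0 < th - 1 by rewrite subr_gt0.
have th_gt0 : 0 < th := lt_trans ltr01 th_gt1.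
have zn_gt0 n : 0 < normc (z + n%:R) by rewrite normc_gt0 // addr_eq0.
set N0 := Num.bound ((1 + th * normc z) / (th - 1)).
apply: (ratio_le_geometric (N0 := N0)) => // [n|n n_ge].
  by rewrite divr_ge0 ?normc_ge0.
rewrite pochhammerS normcM factS natrM invfM.
rewrite [X in X <= _](_ : _ =
  n.+1%:R / normc (z + n%:R) * (n`!%:R / normc (pochhammer z n))); last by ring.
rewrite ler_wpM2r ?divr_ge0 ?normc_ge0 // ler_pdivrMr //.
have : n%:R <= normc z + normc (z + n%:R).
  by rewrite -normc_natr -(normcN z) -[X in normc X <= _](addKr z) le_normcD.
have : 1 + th * normc z < (th - 1) * n%:R.
  rewrite [_ * n%:R]mulrC -ltr_pdivrMr //; apply: lt_le_trans (archi_boundP _) _.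
    exact: divr_ge0 (addr_ge0 ler01 (mulr_ge0 (ltW th_gt0) (normc_ge0 z))) (ltW th1_gt0).
  by rewrite ler_nat.
by have := normc_ge0 z; rewrite -natr1; nra.
Qed.

End PochhammerGrowth.

Lemma prod_ratio_regroup (F : fieldType) (p m : nat) (P : 'I_p -> F)
  (Q : 'I_p.-1 -> 'I_m -> F) (f y : 'I_m -> F) (N : F) (n : 'I_m -> nat) :
  (0 < p)%N -> N != 0 -> (forall k, f k != 0) -> (forall j k, Q j k != 0) ->
  (\prod_j P j) / (\prod_k ((\prod_j Q j k) * f k)) * \prod_k (y k ^+ p) ^+ n k
  = (\prod_j (P j / N)) * (\prod_k \prod_j (f k / Q j k)) *
    (N / \prod_k f k * \prod_k y k ^+ n k) ^+ p.
Proof.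
case: p P Q => // p P Q _ N_neq0 f_neq0 Q_neq0 /=.
have Qk_neq0 k : \prod_j Q j k != 0 by apply/prodf_neq0 => j _.
have -> : \prod_j (P j / N) = (\prod_j P j) * N^-1 ^+ p.+1.
  by rewrite big_split /= prodr_const card_ord.
have -> : \prod_k \prod_j (f k / Q j k) = \prod_k (f k ^+ p / \prod_j Q j k).
  by apply: eq_bigr => k _; rewrite big_split /= prodr_const card_ord prodfV.
have -> : (N / \prod_k f k * \prod_k y k ^+ n k) ^+ p.+1 =
    N ^+ p.+1 * \prod_k ((f k)^-1 * y k ^+ n k) ^+ p.+1.
  by rewrite -mulrA -prodfV -big_split /= exprMn prodrXl.
rewrite -mulrA -prodfV -big_split /=.
have -> : \prod_k ((\prod_j Q j k * f k)^-1 * (y k ^+ p.+1) ^+ n k) =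
    \prod_k (f k ^+ p / \prod_j Q j k * ((f k)^-1 * y k ^+ n k) ^+ p.+1).
  apply: eq_bigr => k _; rewrite exprAC exprMn exprVn !exprS.
  move: (f k ^+ p) (y k ^+ n k ^+ p) (expf_neq0 p (f_neq0 k)) => fp Yp fp_neq0.
  by field; rewrite f_neq0 Qk_neq0 fp_neq0.
rewrite big_split /=.
have NNV : N^-1 ^+ p.+1 * N ^+ p.+1 = 1 by rewrite exprVn mulVf ?expf_neq0.
move: (\prod_j P j) (\prod_k (f k ^+ p / _)) (\prod_k (_ ^+ p.+1)) NNV => X Y Z NNV.
by rewrite -[LHS]mulr1 -NNV; ring.
Qed.

Lemma normc_FC_term (R : realType) p m (a : 'I_p -> R[i])
  (B : 'I_p.-1 -> 'I_m -> R[i]) (x : 'I_m -> R[i]) (r : 'I_m -> R)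
  (nn : {ffun 'I_m -> nat}) :
  (0 < p)%N -> (forall j k n, B j k != - n%:R) ->
  (forall k, r k ^+ p = normc (x k)) ->
  normc (FC_term a B x nn) =
    (\prod_j (normc (pochhammer (a j) (\sum_k nn k)) / (\sum_k nn k)`!%:R)) *
    (\prod_k \prod_j ((nn k)`!%:R / normc (pochhammer (B j k) (nn k)))) *
    ((\sum_k nn k)`!%:R / \prod_k (nn k)`!%:R * \prod_k r k ^+ nn k) ^+ p.
Proof.
move=> p_gt0 B_poles rp; rewrite -prod_ratio_regroup //.
- rewrite /FC_term !normcM normcV !normc_prod; congr (_ / _ * _).
    by apply: eq_bigr => k _; rewrite normcM normc_prod normc_natr.
  by apply: eq_bigr => k _; rewrite normcX rp.
move=> j k; rewrite normc_prod gt_eqF // prodr_gt0 // => i _.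
by rewrite normc_gt0 // addr_eq0.
Qed.

Lemma FC_term_le_geometric (R : realType) p m (a : 'I_p -> R[i])
  (B : 'I_p.-1 -> 'I_m -> R[i]) (x : 'I_m -> R[i]) (r : 'I_m -> R) (th : R) :
  (0 < p)%N -> 1 < th -> (forall j k n, B j k != - n%:R) ->
  (forall k, 0 <= r k) -> (forall k, r k ^+ p = normc (x k)) ->
  exists C, forall nn, normc (FC_term a B x nn) <=
    C * (th ^+ p * th ^+ p.-1 * (\sum_k r k) ^+ p) ^+ (\sum_k nn k).
Proof.
move=> p_gt0 th_gt1 B_poles r_ge0 rp.
have [Ca Ca_le] :=
  fin_all_exists (fun j => pochhammer_le_geometric (a j) th_gt1).
have [Cb Cb_le] := fin_all_exists (fun jk : 'I_p.-1 * 'I_m =>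
  inv_pochhammer_le_geometric th_gt1 (B_poles jk.1 jk.2)).
exists ((\prod_j Ca j) * \prod_k \prod_j Cb (j, k)) => nn.
rewrite (normc_FC_term _ _ p_gt0 B_poles rp).
set N := (\sum_k nn k)%N.
have le_a : \prod_j (normc (pochhammer (a j) N) / N`!%:R) <=
    (\prod_j Ca j) * (th ^+ N) ^+ p.
  rewrite -[in X in _ * X](card_ord p) -prodr_const -big_split /=.
  by apply: ler_prod => j _; rewrite divr_ge0 ?normc_ge0 // Ca_le.
have le_B : \prod_k \prod_j ((nn k)`!%:R / normc (pochhammer (B j k) (nn k))) <=
    (\prod_k \prod_j Cb (j, k)) * (th ^+ p.-1) ^+ N.
  rewrite expr_sum -big_split /=.
  apply: ler_prod => k _; rewrite prodr_ge0 => [|j _]; last first.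
    by rewrite divr_ge0 ?normc_ge0.
  rewrite exprAC -[in X in _ * X](card_ord p.-1) -prodr_const -big_split /=.
  by apply: ler_prod => j _; rewrite divr_ge0 ?normc_ge0 //= (Cb_le (j, k)).
have le_multinomial : N`!%:R / \prod_k (nn k)`!%:R * \prod_k r k ^+ nn k <=
    (\sum_k r k) ^+ N := multinomial_le _ _ r_ge0.
have a_ge0 : 0 <= \prod_j (normc (pochhammer (a j) N) / N`!%:R).
  by apply: prodr_ge0 => j _; rewrite divr_ge0 ?normc_ge0.
have B_ge0 :
    0 <= \prod_k \prod_j ((nn k)`!%:R / normc (pochhammer (B j k) (nn k))).
  by do 2![apply: prodr_ge0 => ? _]; rewrite divr_ge0 ?normc_ge0.
have M_ge0 : 0 <= N`!%:R / \prod_k (nn k)`!%:R * \prod_k r k ^+ nn k.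
  by rewrite !mulr_ge0 ?invr_ge0 ?prodr_ge0 // => k _; rewrite exprn_ge0.
rewrite [X in _ <= X](_ : _ = (\prod_j Ca j * (th ^+ N) ^+ p) *
    (\prod_k \prod_j Cb (j, k) * (th ^+ p.-1) ^+ N) * ((\sum_k r k) ^+ N) ^+ p).
  rewrite ler_pM ?mulr_ge0 ?exprn_ge0 ?ler_pM //.
  by apply: lerXn2r; rewrite ?nnegrE ?exprn_ge0 ?sumr_ge0.
by rewrite !exprMn (exprAC th p) (exprAC (\sum_k r k) p); ring.
Qed.

Theorem mainTheorem1 (R : realType) (m p : nat) (hm : (1 <= m)%N) (hp : (2 <= p)%N)
  (a : 'I_p -> R[i]) (B : 'I_p.-1 -> 'I_m -> R[i])
  (hB : forall (j : 'I_p.-1) (k : 'I_m) (n : nat), B j k != - (n%:R))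
  (x : 'I_m -> R[i]) (hx : FC_domain p x) :
  FC_abs_conv a B x.
Proof.
have p_gt0 : (0 < p)%N by apply: leq_trans hp.
pose r k := normc (x k) `^ p%:R^-1.
have r_ge0 k : 0 <= r k by apply: powR_ge0.
have rp k : r k ^+ p = normc (x k).
  rewrite -powR_mulrn ?normc_ge0 // -powRrM mulVf ?powRr1 ?normc_ge0 //.
  by rewrite pnatr_eq0 -lt0n.
have rho_lt1 : \sum_k r k < 1 := hx.
have rho_ge0 : 0 <= \sum_k r k by apply: sumr_ge0.
set rho := \sum_k r k in rho_lt1 rho_ge0 *.
(* [th ^+ 2 <= 2 - rho], so [th ^+ 2 * rho <= 1 - (1 - rho) ^+ 2 < 1]. *)
pose th := 1 + (1 - rho) / 3%:R.
have th_gt1 : 1 < th by rewrite ltrDl divr_gt0 // subr_gt0.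
have th2_rho_lt1 : th * th * rho < 1 by rewrite /th; nra.
have q_lt1 : th ^+ p * th ^+ p.-1 * rho ^+ p < 1.
  have th_ge0 : 0 <= th := ltW (lt_trans ltr01 th_gt1).
  apply: (le_lt_trans (y := (th * th * rho) ^+ p)).
    rewrite !exprMn ler_wpM2r ?exprn_ge0 // ler_wpM2l ?exprn_ge0 //.
    by rewrite ler_weXn2l ?leq_pred // ltW.
  by rewrite expr_lt1 ?mulr_ge0.
have [C FC_le] := FC_term_le_geometric a p_gt0 th_gt1 hB r_ge0 rp.
apply: (summable_le_geometric (C := C) _ q_lt1) => [|nn].
  by rewrite !mulr_ge0 ?exprn_ge0 // ltW // (lt_trans ltr01).
by rewrite ger0_norm ?normc_ge0 // FC_le.
Qed.
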